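(* Let $k\in\{1,\dots,n\}$, let $\nu$ be an $n$-colorless partition with $\nu_1<n$, and let $\mu$ be a partition with $\mu_1<n$ (so $\nu'_n=\mu'_n=0$). Let $\tau\in\mathfrak S_n$ be the permutation determined by $\tau(\overline{\nu'_j-j+k})=j$ for $1\le j\le n$. For $l=2,\dots,n$ let $\nu_{\ge l}$ be the partition conjugate to $(\nu'_l,\nu'_{l+1},\dots,\nu'_n)$. Consider the finite collection of colored partitions consisting, for each $l=2,\dots,n$, of $\mu'_{l-1}-\mu'_l$ copies of $\nu_{\ge l}$, in which the box $(x,y)$ carries color $\overline{k-l+1+x-y}$. For $j\in\{1,\dots,n\}$, let $\sharp(CC_j)$ (resp. $\sharp(CV_j)$) be the total number, over this collection, of concave (resp. convex) corners of color $j$. Then for all $j\in\{1,\dots,n\}$, $$\sharp(CC_j)-\sharp(CV_j)=\mu'_{\tau(j)}-\mu'_{\tau(j-1)}+\mu'_1\delta_{j,k},$$ where $\tau(0)$ means $\tau(n)$.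
   Context: Fix $n\ge3$. For an integer $a$, $\overline a\in\{1,\dots,n\}$ denotes its representative mod $n$; colors are read mod $n$ in $\{1,\dots,n\}$. A partition $\nu$ is $n$-colorless if, for every residue $i$ mod $n$, the number of boxes $(x,y)$ ($\nu_x\ge y$) with $x-y\equiv i$ is the same. For such $\nu$ with $\nu_1<n$, the integers $\nu'_j-j+k$ ($1\le j\le n$) are pairwise distinct mod $n$, so $\tau$ is well-defined. Corners of a partition $\gamma$ with conjugate $\gamma'$: - $(x,y)\in\mathbb Z_{\ge1}^2$ is a convex corner if $\gamma'_{y+1}<\gamma'_y=x$; - $(x,y)$ is a concave corner if $\gamma'_y=x-1$ and either $y=1$ or $\gamma'_{y-1}>x-1$. The color of a corner $(x,y)$ is the color assigned to position $(x,y)$ by the rule stated in the claim. *)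

From mathcomp Require Import all_boot all_order all_algebra.
Set Implicit Arguments. Unset Strict Implicit. Unset Printing Implicit Defensive.
Import Order.TTheory GRing.Theory Num.Theory.

(* A partition is a weakly decreasing sequence of positive naturals
   (nu_1 >= nu_2 >= ... > 0); nu_x = nth 0 nu (x-1), 1-indexed. *)
Definition is_partition (s : seq nat) : bool :=
  sorted geq s && all (fun a => 0 < a) s.

Definition part1 (s : seq nat) : nat := head 0 s.

Definition conjp (s : seq nat) (y : nat) : nat := count (fun a => y <= a) s.

(* conjugate of a (weakly decreasing, possibly zero-padded) sequence,
   returned as a partition (sequence of positive parts) *)
Definition conj_seq (s : seq nat) : seq nat :=
  [seq count (fun a => y <= a) s | y <- iota 1 (foldr maxn 0 s)].

Definition colr (n : nat) (a : int) : nat :=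
  let r := `|(a %% n%:Z)%Z|%N in if r == 0 then n else r.

Definition boxcount (n : nat) (nu : seq nat) (i : nat) : nat :=
  \sum_(0 <= x0 < size nu) \sum_(0 <= y0 < nth 0 nu x0)
     ((x0.+1%:Z - y0.+1%:Z) == i%:Z %[mod n%:Z])%Z.

Definition colorless (n : nat) (nu : seq nat) : Prop :=
  forall i j, i < n -> j < n -> boxcount n nu i = boxcount n nu j.

Definition nu_ge (n : nat) (nu : seq nat) (l : nat) : seq nat :=
  conj_seq [seq conjp nu y | y <- iota l (n.+1 - l)].

Definition is_convex (g : seq nat) (x y : nat) : bool :=
  (conjp g y.+1 < conjp g y) && (conjp g y == x).

Definition is_concave (g : seq nat) (x y : nat) : bool :=
  (conjp g y == x.-1) && ((y == 1) || (x.-1 < conjp g y.-1)).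

(* number of corners (x,y) of gamma of kind P whose color c x y equals j.
   All corners satisfy 1 <= x <= size g + 1 and 1 <= y <= g_1 + 1,
   so the bounded enumeration counts all of them. *)
Definition ncorners (P : seq nat -> nat -> nat -> bool) (g : seq nat)
    (c : nat -> nat -> nat) (j : nat) : nat :=
  \sum_(1 <= x < (size g).+2) \sum_(1 <= y < (foldr maxn 0 g).+2)
     (P g x y && (c x y == j)).

Definition ncorners_coll (P : seq nat -> nat -> nat -> bool) (n k : nat)
    (nu mu : seq nat) (j : nat) : nat :=
  \sum_(2 <= l < n.+1)
     (conjp mu l.-1 - conjp mu l) *
     ncorners P (nu_ge n nu l)
       (fun x y => colr n (k%:Z - l%:Z + 1 + x%:Z - y%:Z)) j.

From mathcomp Require Import all_boot all_order all_algebra zify.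
Import Order.TTheory GRing.Theory Num.Theory.
Set Implicit Arguments. Unset Strict Implicit. Unset Printing Implicit Defensive.

(** For one copy of [nu_ge n nu l], write [C y] for the length of its column [y]. The column
    lengths weakly decrease, so column [y] carries at most one convex corner (at its end, when
    the next column is shorter) and at most one concave corner (just below its end, when the
    previous column is longer). Colors are constant along diagonals, so a missing convex corner
    in column [y] and the missing concave corner in column [y+1] would carry the same color;
    hence concave minus convex counts telescope into (number of columns whose first free box has
    color [j]) minus (number of columns whose last box has color [j]), plus a boundary term for
    the empty column. Column [y] of [nu_ge n nu l] is [nu'_m] with [m = l + y - 1], and the
    color of its last box is [tau^-1 m]; so one copy contributes
    [(l <= tau (j - 1)) - (l <= tau j) + (j == k)], and summing with weights
    [mu'_(l-1) - mu'_l] telescopes to the claim. *)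

Section Colors.
Local Open Scope ring_scope.
Variable n : nat.
Hypothesis n_gt0 : (0 < n)%N.

Lemma colr_mod (a : int) : ((colr n a)%:Z = a %[mod n])%Z.
Proof.
have r_eq : (`|(a %% n)%Z|%N)%:Z = (a %% n)%Z.
  by rewrite gez0_abs // modz_ge0 // eqz_nat -lt0n.
rewrite /colr; case: eqP => [r0 | _]; last by rewrite r_eq modz_mod.
by rewrite modzz -r_eq r0.
Qed.

Lemma colr_range (a : int) : (1 <= colr n a <= n)%N.
Proof.
rewrite /colr; case: eqP => [_ | /eqP r_neq0]; first by rewrite n_gt0 leqnn.
rewrite lt0n r_neq0 -lez_nat gez0_abs ?modz_ge0 ?eqz_nat -?lt0n //.
by rewrite ltW // ltz_pmod.
Qed.

Lemma eq_colr (a b : int) : (colr n a == colr n b) = (a == b %[mod n])%Z.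
Proof.
apply/eqP/eqP => [eq_ab | eq_mod]; last by rewrite /colr eq_mod.
by rewrite -colr_mod eq_ab colr_mod.
Qed.

Lemma colr_id x : (1 <= x <= n)%N -> colr n x = x.
Proof.
rewrite /colr modz_nat /= => /andP[x_gt0]; rewrite leq_eqVlt => /orP[/eqP-> | x_lt].
  by rewrite modnn.
by rewrite modn_small // eqn0Ngt x_gt0.
Qed.

Lemma colr_eq_mod (a : int) j : (1 <= j <= n)%N -> (colr n a == j) = (a == j %[mod n])%Z.
Proof. by move=> j_range; rewrite -{1}(colr_id j_range) eq_colr. Qed.

Lemma colr_prev j : (1 <= j <= n)%N -> colr n (j%:Z - 1) = if j == 1%N then n else j.-1.
Proof.
case: j => // -[_ | j /andP[_ j_lt]] /=; first by rewrite subrr /colr mod0z.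
by rewrite -[j.+2]addn1 PoszD addrK colr_id // (ltnW j_lt).
Qed.

Lemma colrD1 (a : int) j : (1 <= j <= n)%N ->
  (colr n (a + 1) == j) = (colr n a == colr n (j%:Z - 1)).
Proof.
by move=> j_range; rewrite colr_eq_mod // eq_colr !eqz_mod_dvd opprB addrA addrAC.
Qed.

End Colors.

Lemma leq_conjp g y y' : y <= y' -> conjp g y' <= conjp g y.
Proof. by move=> le_yy'; apply: sub_count => a /=; apply: leq_trans. Qed.

Lemma conjp_eq0 g y : {in g, forall a, a < y} -> conjp g y = 0.
Proof.
move=> g_lt; apply/eqP; rewrite eqn0Ngt -has_count; apply/hasPn => a /g_lt.
by rewrite ltnNge.
Qed.

Lemma leq_foldr_max g a : a \in g -> a <= foldr maxn 0 g.
Proof.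
elim: g => //= b g IHg; rewrite inE leq_max => /orP[/eqP-> | /IHg->];
  by rewrite ?leqnn ?orbT.
Qed.

Lemma conjp_gt_max g y : foldr maxn 0 g < y -> conjp g y = 0.
Proof. by move=> max_lt; apply: conjp_eq0 => a /leq_foldr_max/leq_ltn_trans; apply. Qed.

Lemma conjp_gt_part1 s y : is_partition s -> part1 s < y -> conjp s y = 0.
Proof.
case: s => [|a s] /andP[s_sorted _] a_lt; first by [].
apply: conjp_eq0 => b; rewrite inE => /orP[/eqP-> // | b_in].
have /allP/(_ b b_in) := order_path_min (rev_trans leq_trans) s_sorted.
by move=> /= b_le; apply: leq_ltn_trans a_lt.
Qed.

Lemma count_geq_sorted s t y : sorted geq s -> 0 < t -> 0 < y ->
  (y <= count (fun a => t <= a) s) = (t <= nth 0 s y.-1).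
Proof.
move=> + t_gt0; elim: s y => [|a s IHs] y s_sorted y_gt0 /=.
  by rewrite nth_nil leqNgt y_gt0 leqNgt t_gt0.
have s_le_a := order_path_min (rev_trans leq_trans) s_sorted.
case: (leqP t a) => [t_le_a | a_lt_t].
  case: y y_gt0 => // -[|y] _ //=; rewrite add1n ltnS IHs //.
  exact: path_sorted s_sorted.
have -> : count (fun b => t <= b) s = 0.
  by apply: conjp_eq0 => b /(allP s_le_a) /= b_le; apply: leq_ltn_trans a_lt_t.
case: y y_gt0 => // -[|y] _ /=; apply/esym/negbTE; rewrite -ltnNge //.
have [y_lt | ] := ltnP y (size s); last by move=> ?; rewrite nth_default.
exact: leq_ltn_trans (allP s_le_a _ (mem_nth 0 y_lt)) a_lt_t.
Qed.

Lemma conjp_conj_seq s y : sorted geq s -> 0 < y -> conjp (conj_seq s) y = nth 0 s y.-1.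
Proof.
move=> s_sorted y_gt0; rewrite /conjp /conj_seq count_map.
rewrite (eq_in_count (a2 := fun t => t < 1 + nth 0 s y.-1)); last first.
  by move=> t; rewrite mem_iota => /andP[t_gt0 _] /=; rewrite count_geq_sorted.
rewrite -size_filter filter_iota_ltn ?size_iota //.
have [y_lt | ] := ltnP y.-1 (size s); last by move=> ?; rewrite nth_default.
exact/leq_foldr_max/mem_nth.
Qed.

Lemma sum_nat_eq_and m n i (b : nat -> bool) :
  \sum_(m <= x < n) ((x == i) && b x) = (m <= i < n) && b i.
Proof.
rewrite (eq_bigr (fun x => if x == i then nat_of_bool (b x) else 0)); last first.
  by move=> x _; case: eqP.
by rewrite -big_mkcond big_nat1_eq; case: ifP.
Qed.

Lemma sum_nat_eq0_from (F : nat -> nat) m K n : m <= K <= n ->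
  (forall y, K <= y -> F y = 0) -> \sum_(m <= y < n) F y = \sum_(m <= y < K) F y.
Proof.
move=> /andP[le_mK le_Kn] F_eq0; rewrite (big_cat_nat le_mK le_Kn) /=.
rewrite [X in _ + X]big_nat_cond [X in _ + X]big1 ?addn0 //.
by move=> y /andP[/andP[/F_eq0]].
Qed.

Section Corners.
Variables (g : seq nat) (c : nat -> nat -> nat) (j : nat).
Local Notation C := (conjp g).

Definition convex_col y : bool := (C y.+1 < C y) && (c (C y) y == j).
Definition concave_col y : bool := ((y == 1) || (C y < C y.-1)) && (c (C y).+1 y == j).

Lemma ncorners_convexE :
  ncorners is_convex g c j = \sum_(1 <= y < (foldr maxn 0 g).+2) convex_col y.
Proof.
rewrite /ncorners exchange_big_nat /=; apply: eq_big_nat => y _.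
rewrite (eq_bigr (fun x => nat_of_bool ((x == C y) && convex_col y))); last first.
  move=> x _; rewrite /is_convex /convex_col eq_sym.
  by case: eqP => [-> | _]; rewrite ?andbT ?andbF.
rewrite sum_nat_eq_and.
case: (boolP (convex_col y)) => [/andP[C_lt _] | _]; last by rewrite andbF.
by rewrite (leq_ltn_trans _ C_lt) //= ltnS (leq_trans (count_size _ _)).
Qed.

Lemma ncorners_concaveE :
  ncorners is_concave g c j = \sum_(1 <= y < (foldr maxn 0 g).+2) concave_col y.
Proof.
rewrite /ncorners exchange_big_nat /=; apply: eq_big_nat => y _.
rewrite (eq_big_nat _ _ (F2 := fun x => nat_of_bool ((x == (C y).+1) && concave_col y)));
  last first.
  move=> [|x] // _; rewrite /is_concave /concave_col /= eqSS.
  by have [-> | ne] := eqVneq x (C y); rewrite ?eqxx ?andbA // eq_sym (negbTE ne).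
by rewrite sum_nat_eq_and /= !ltnS (count_size _ _).
Qed.

Lemma ncorners_colsE N : C N.+1 = 0 ->
  ncorners is_convex g c j = \sum_(1 <= y < N.+2) convex_col y /\
  ncorners is_concave g c j = \sum_(1 <= y < N.+2) concave_col y.
Proof.
move=> C_N; set K := minn (foldr maxn 0 g).+2 N.+2.
have C_K : C K.-1 = 0.
  by rewrite /K /minn; case: ifP => //= _; apply: conjp_gt_max.
have cols_eq0 y : K <= y -> convex_col y = false /\ concave_col y = false.
  move=> le_Ky; have le_Ky' : K.-1 <= y.-1 by rewrite -!subn1 leq_sub2r.
  have C_y1 : C y.-1 = 0 by apply/eqP; rewrite -leqn0 -C_K leq_conjp.
  have C_y : C y = 0 by apply/eqP; rewrite -leqn0 -C_y1 leq_conjp // leq_pred.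
  have y_gt1 : 1 < y by apply: leq_trans le_Ky; rewrite leq_min.
  by rewrite /convex_col /concave_col C_y C_y1 (gtn_eqF y_gt1) !ltn0.
have K_le1 : 1 <= K <= (foldr maxn 0 g).+2 by rewrite geq_minl leq_min.
have K_le2 : 1 <= K <= N.+2 by rewrite geq_minr leq_min.
rewrite ncorners_convexE ncorners_concaveE.
rewrite !(sum_nat_eq0_from K_le1) ?(sum_nat_eq0_from K_le2);
  by [split | move=> y /cols_eq0[-> _] | move=> y /cols_eq0[_ ->]].
Qed.

Hypothesis c_diag : forall x y, c x.+1 y.+1 = c x y.

Lemma ncorners_concave_sub_convex N : C N.+1 = 0 ->
  ((ncorners is_concave g c j)%:Z - (ncorners is_convex g c j)%:Z
   = (\sum_(1 <= y < N.+2) (c (C y).+1 y == j))%N%:Z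
     - (\sum_(1 <= y < N.+2) (c (C y) y == j))%N%:Z + (c 0 N.+1 == j)%:Z)%R.
Proof.
move=> C_N; have [-> ->] := ncorners_colsE C_N.
(* When column [y+1] is as long as column [y], column [y] has no convex corner, column [y+1] has
   no concave corner, and by [c_diag] their candidate boxes have the same color. *)
pose flat y : bool := (C y.+1 == C y) && (c (C y) y == j).
have C_step y : C y.+1 = C y \/ C y.+1 < C y.
  by apply/predU1P; rewrite -leq_eqVlt leq_conjp.
have concave_flat y : 0 < y -> concave_col y.+1 + flat y = (c (C y.+1).+1 y.+1 == j).
  move=> y_gt0; rewrite /concave_col /flat /= eqSS (gtn_eqF y_gt0) /=.
  by case: (C_step y) => [-> | lt_C]; rewrite ?ltnn ?c_diag ?lt_C ?(ltn_eqF lt_C) ?eqxx ?addn0.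
have convex_flat y : convex_col y + flat y = (c (C y) y == j).
  rewrite /convex_col /flat.
  by case: (C_step y) => [-> | lt_C]; rewrite ?ltnn ?lt_C ?(ltn_eqF lt_C) ?eqxx ?addn0.
have sum_concave : \sum_(1 <= y < N.+2) concave_col y + \sum_(1 <= y < N.+1) flat y
    = \sum_(1 <= y < N.+2) (c (C y).+1 y == j).
  rewrite big_nat_recl // [RHS]big_nat_recl // -addnA -big_split /=; congr (_ + _).
  by apply: eq_big_nat => y /andP[y_gt0 _]; apply: concave_flat.
have sum_convex : \sum_(1 <= y < N.+2) convex_col y + \sum_(1 <= y < N.+2) flat y
    = \sum_(1 <= y < N.+2) (c (C y) y == j).
  by rewrite -big_split; apply: eq_bigr.
have flat_last : flat N.+1 = (c 0 N.+1 == j).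
  have C_N2 : C N.+2 = 0 by apply/eqP; rewrite -leqn0 -C_N leq_conjp.
  by rewrite /flat C_N C_N2.
rewrite [X in _ + X = _](big_nat_recr N.+1) //= flat_last in sum_convex.
lia.
Qed.

End Corners.

Section ColumnColors.
Local Open Scope ring_scope.
Variables (n k : nat) (nu : seq nat) (tau : nat -> nat).
Hypotheses (n_gt0 : (0 < n)%N) (k_range : (1 <= k <= n)%N) (nu_n : conjp nu n = 0%N).
Hypothesis tauK : forall m, (1 <= m <= n)%N ->
  tau (colr n ((conjp nu m)%:Z - m%:Z + k%:Z)) = m.

Local Notation tau_inv m := (colr n ((conjp nu m)%:Z - m%:Z + k%:Z)).

Lemma tau_inv_onto j : (1 <= j <= n)%N -> exists2 m, (1 <= m <= n)%N & tau_inv m = j.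
Proof.
move=> j_range; set s := iota 1 n.
have in_s m : (m \in s) = (1 <= m <= n)%N by rewrite mem_iota add1n ltnS.
have uniq_img : uniq [seq tau_inv m | m <- s].
  rewrite map_inj_in_uniq ?iota_uniq // => m m'; rewrite !in_s => m_range m'_range eq_mm'.
  by rewrite -(tauK m_range) -(tauK m'_range) eq_mm'.
have img_sub : {subset [seq tau_inv m | m <- s] <= s}.
  by move=> _ /mapP[m _ ->]; rewrite in_s colr_range.
have [_ img_eq] := uniq_min_size uniq_img img_sub (eq_leq (esym (size_map _ _))).
have : j \in [seq tau_inv m | m <- s] by rewrite img_eq in_s.
by case/mapP => m; rewrite in_s => m_range ->; exists m.
Qed.

Lemma tau_range j : (1 <= j <= n)%N -> (1 <= tau j <= n)%N.
Proof. by move=> /tau_inv_onto[m m_range <-]; rewrite tauK. Qed.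

Lemma tau_inv_eq m j : (1 <= m <= n)%N -> (1 <= j <= n)%N ->
  (tau_inv m == j) = (m == tau j).
Proof.
move=> m_range j_range; apply/eqP/eqP => [<- | ->]; first by rewrite tauK.
by have [m' m'_range <-] := tau_inv_onto j_range; rewrite tauK.
Qed.

Lemma corners_nu_ge l j : (0 < l <= n)%N -> (1 <= j <= n)%N ->
  let c x y := colr n (k%:Z - l%:Z + 1 + x%:Z - y%:Z) in
  (ncorners is_concave (nu_ge n nu l) c j)%:Z - (ncorners is_convex (nu_ge n nu l) c j)%:Z
  = (l <= tau (colr n (j%:Z - 1)))%N%:Z - (l <= tau j)%N%:Z + (j == k)%:Z.
Proof.
move=> /andP[l_gt0 l_le] j_range c; set g := nu_ge n nu l; set N := (n - l)%N.
have g_sorted : sorted geq [seq conjp nu y | y <- iota l (n.+1 - l)].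
  apply: (homo_sorted (e := leq)); last exact: iota_sorted.
  by move=> y y'; apply: leq_conjp.
have conjp_g y : (y <= N)%N -> conjp g y.+1 = conjp nu (l + y).
  by move=> y_le; rewrite conjp_conj_seq // (nth_map 0) ?nth_iota ?size_iota //; lia.
have conjp_g_N : conjp g N.+1 = 0%N by rewrite conjp_g // subnKC.
have c_diag x y : c x.+1 y.+1 = c x y by rewrite /c !intS; congr colr; lia.
have sum_pick t : (t <= n)%N -> (\sum_(1 <= y < N.+2) (l + y.-1 == t))%N = (l <= t)%N.
  move=> t_le.
  rewrite (eq_big_nat _ _ (F2 := fun y => nat_of_bool ((y == (t - l).+1) && (l <= t)%N))).
    by rewrite sum_nat_eq_and; case: leqP => ? /=; rewrite ?andbF //; lia.
  by move=> y /andP[y_gt0 _]; apply/eqP/idP; lia.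
have j'_range := colr_range n_gt0 (j%:Z - 1).
have [tau_j_range tau_j'_range] := (tau_range j_range, tau_range j'_range).
have color_g y : (y <= N)%N ->
  c (conjp g y.+1) y.+1 = tau_inv (l + y) /\
  c (conjp g y.+1).+1 y.+1 = colr n ((conjp nu (l + y))%:Z - (l + y)%N%:Z + k%:Z + 1).
  move=> y_le; rewrite conjp_g // /c; split; congr colr; lia.
rewrite (ncorners_concave_sub_convex j c_diag conjp_g_N).
congr (_%:Z - _%:Z + _%:Z).
- rewrite -(sum_pick _ (proj2 (andP tau_j'_range))); apply: eq_big_nat => -[//|y] /andP[_ y_lt].
  by rewrite (proj2 (color_g _ _)) ?colrD1 ?tau_inv_eq //; lia.
- rewrite -(sum_pick _ (proj2 (andP tau_j_range))); apply: eq_big_nat => -[//|y] /andP[_ y_lt].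
  by rewrite (proj1 (color_g _ _)) ?tau_inv_eq //; lia.
rewrite /c [X in colr n X](_ : _ = k%:Z - n%:Z); last by rewrite /N; lia.
rewrite colr_eq_mod // eqz_mod_dvd addrAC rpredBr ?dvdzz // -eqz_mod_dvd.
by rewrite -colr_eq_mod // colr_id // eq_sym.
Qed.

End ColumnColors.

Lemma sum_weighted_telescope (V : zmodType) (f : nat -> V) n t : (1 <= t <= n)%N ->
  (\sum_(2 <= l < n.+1) (f l.-1 - f l) *+ (l <= t)%N = f 1%N - f t)%R.
Proof.
move=> /andP[t_gt0 t_le]; rewrite (@big_cat_nat _ _ _ t.+1) //= ?ltnS //.
rewrite [X in (_ + X)%R]big_nat_cond [X in (_ + X)%R]big1 ?addr0; last first.
  by move=> l /andP[/andP[t_lt _] _]; rewrite leqNgt t_lt mulr0n.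
rewrite big_add1 /= (eq_big_nat _ _ (F2 := fun l => (- (f l.+1 - f l))%R)); last first.
  by move=> l /andP[_ l_lt]; rewrite l_lt mulr1n opprB.
by rewrite sumrN telescope_sumr // opprB.
Qed.

Theorem mainTheorem14 (n k : nat) (nu mu : seq nat) (tau : nat -> nat) :
  3 <= n -> 1 <= k <= n ->
  is_partition nu -> colorless n nu -> part1 nu < n ->
  is_partition mu -> part1 mu < n ->
  (forall j, 1 <= j <= n ->
     tau (colr n ((conjp nu j)%:Z - j%:Z + k%:Z)) = j) ->
  forall j, 1 <= j <= n ->
    ((ncorners_coll is_concave n k nu mu j)%:Z
       - (ncorners_coll is_convex n k nu mu j)%:Z
     = (conjp mu (tau j))%:Z - (conjp mu (tau (if j == 1%N then n else j.-1)))%:Z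
       + (if j == k then conjp mu 1 else 0%N)%:Z)%R.
Proof.
(* [colorless n nu] only guarantees that [tau] exists; the hypothesis on [tau] is all we use. *)
move=> n_ge3 k_range nu_part _ nu_lt mu_part mu_lt tauK j j_range.
have n_gt0 : 0 < n by apply: leq_trans n_ge3.
have nu_n := conjp_gt_part1 nu_part nu_lt; have mu_n := conjp_gt_part1 mu_part mu_lt.
rewrite -colr_prev //; set j' := colr n (j%:Z - 1).
have tau_in := tau_range n_gt0 tauK.
pose D l := ((conjp mu l.-1)%:Z - (conjp mu l)%:Z)%R.
rewrite /ncorners_coll -!natz !natr_sum -sumrB.
rewrite (eq_big_nat _ _ (F2 := fun l =>
    D l *+ (l <= tau j') - D l *+ (l <= tau j) + D l *+ (l <= n) *+ (j == k))%R); last first.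
  move=> l /andP[l_ge2 l_lt]; rewrite ltnS in l_lt.
  rewrite !natrM -mulrBr !natz (corners_nu_ge n_gt0 k_range nu_n tauK) ?(ltnW l_ge2) //.
  rewrite -subzn ?leq_conjp ?leq_pred // mulrDr mulrBr -!natz !mulr_natr l_lt mulr1n.
  by rewrite /D /j' !natz.
rewrite big_split /= sumrB sumrMnl.
rewrite !sum_weighted_telescope ?tau_in ?colr_range ?n_gt0 ?leqnn //.
by rewrite mu_n !natz; case: eqP => _; lia.
Qed.
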